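(* Let $G$ be a group, $N$ a normal subgroup of $G$, $\phi:G\to G/N$ the canonical projection, and $L,R$ nonempty subsets of $G$. Then $2\mathrm{S}(G;L,R)$ is weakly connected if and only if $2\mathrm{S}(G/N;\phi(L),\phi(R))$ is weakly connected and any two elements of $N$ are weakly connected to each other in $2\mathrm{S}(G;L,R)$.
   Context: For nonempty subsets $L,R$ of a group $G$, the two-sided group digraph $2\mathrm{S}(G;L,R)$ has vertex set $G$ and a directed arc $(g,h)$ if and only if $h=l^{-1}gr$ for some $l\in L$, $r\in R$. Vertex $g$ is weakly connected to $h$ if there is a sequence $g=g_0,\dots,g_n=h$ with, for each $i$, $(g_{i-1},g_i)$ or $(g_i,g_{i-1})$ an arc (intermediate vertices arbitrary in $G$); a digraph is weakly connected if every pair of vertices is weakly connected. *)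

Set Implicit Arguments.
Unset Strict Implicit.

Record Group := {
  carrier :> Type;
  gmul : carrier -> carrier -> carrier;
  ginv : carrier -> carrier;
  gone : carrier;
  gmulA : forall x y z, gmul x (gmul y z) = gmul (gmul x y) z;
  gmul1l : forall x, gmul gone x = x;
  gmul1r : forall x, gmul x gone = x;
  gmulVl : forall x, gmul (ginv x) x = gone;
  gmulVr : forall x, gmul x (ginv x) = gone
}.

Arguments gmul {g} _ _.
Arguments ginv {g} _.
Arguments gone {g}.

Definition nonempty (G : Group) (S : G -> Prop) : Prop := exists x, S x.

Definition normal_subgroup (G : Group) (N : G -> Prop) : Prop :=
  N gone /\
  (forall x y, N x -> N y -> N (gmul x y)) /\
  (forall x, N x -> N (ginv x)) /\
  (forall g x, N x -> N (gmul (gmul (ginv g) x) g)).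

Definition group_hom (G H : Group) (f : G -> H) : Prop :=
  forall x y, f (gmul x y) = gmul (f x) (f y).

(* phi : G -> Q is (up to isomorphism) the canonical projection G -> G/N:
   a surjective homomorphism whose kernel is exactly N. *)
Definition is_quotient_map (G Q : Group) (N : G -> Prop) (phi : G -> Q) : Prop :=
  group_hom (G:=G) (H:=Q) phi /\ (forall q, exists g, phi g = q) /\
  (forall g, phi g = gone <-> N g).

Definition image (G H : Group) (f : G -> H) (S : G -> Prop) : H -> Prop :=
  fun h => exists x, S x /\ h = f x.

Definition twoS_arc (G : Group) (L R : G -> Prop) (g h : G) : Prop :=
  exists l r, L l /\ R r /\ h = gmul (gmul (ginv l) g) r.

Inductive weakly_conn (G : Group) (L R : G -> Prop) : G -> G -> Prop :=
| wc_refl : forall g, weakly_conn L R g g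
| wc_step : forall g g' h,
    (twoS_arc L R g g' \/ twoS_arc L R g' g) ->
    weakly_conn L R g' h -> weakly_conn L R g h.

Definition weakly_connected (G : Group) (L R : G -> Prop) : Prop :=
  forall g h : G, weakly_conn L R g h.


Set Implicit Arguments.

(* Every arc of 2S(G/N; phi L, phi R) lifts, from any preimage of its tail
   (or head), to an arc of 2S(G; L, R); so a walk in the quotient digraph lifts
   to a walk in 2S(G; L, R) from any preimage of its start.  Walking in the
   quotient from phi g to the identity thus connects every g to an element of
   N = phi^-1(1), and any two elements of N are connected by assumption.
   Conversely, phi maps arcs to arcs and is surjective. *)

Section GroupFacts.
Variable G : Group.

Lemma gmul_cancel_l (a b c : G) : gmul a b = gmul a c -> b = c.
Proof.
  intro H. rewrite <- (gmul1l b), <- (gmul1l c), <- (gmulVl a), <- !gmulA, H.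
  reflexivity.
Qed.

Lemma twoS_unshift (l r x : G) :
  gmul (gmul (ginv l) (gmul (gmul l x) (ginv r))) r = x.
Proof.
  rewrite !gmulA, gmulVl, gmul1l, <- gmulA, gmulVl, gmul1r. reflexivity.
Qed.

Lemma twoS_shift (l r x : G) :
  gmul (gmul l (gmul (gmul (ginv l) x) r)) (ginv r) = x.
Proof.
  rewrite !gmulA, gmulVr, gmul1l, <- gmulA, gmulVr, gmul1r. reflexivity.
Qed.

Variables L R : G -> Prop.

Lemma weakly_conn_trans a b c :
  weakly_conn L R a b -> weakly_conn L R b c -> weakly_conn L R a c.
Proof.
  induction 1; intros; [assumption|]. eapply wc_step; eauto.
Qed.

Lemma weakly_conn_sym a b : weakly_conn L R a b -> weakly_conn L R b a.
Proof.
  induction 1; [apply wc_refl|].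
  eapply weakly_conn_trans; [eassumption|].
  eapply wc_step; [|apply wc_refl]. tauto.
Qed.
End GroupFacts.

Section Homomorphism.
Variables G Q : Group.
Variable phi : G -> Q.
Hypothesis phiM : group_hom phi.
Variables L R : G -> Prop.

Lemma hom_one : phi gone = gone.
Proof.
  apply (@gmul_cancel_l Q (phi gone)).
  rewrite <- phiM, gmul1l, gmul1r. reflexivity.
Qed.

Lemma hom_inv x : phi (ginv x) = ginv (phi x).
Proof.
  apply (@gmul_cancel_l Q (phi x)). rewrite <- phiM, !gmulVr. apply hom_one.
Qed.

Lemma hom_twoS l x r :
  phi (gmul (gmul (ginv l) x) r) = gmul (gmul (ginv (phi l)) (phi x)) (phi r).
Proof. rewrite !phiM, hom_inv. reflexivity. Qed.

Lemma twoS_arc_hom a b :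
  twoS_arc L R a b -> twoS_arc (image phi L) (image phi R) (phi a) (phi b).
Proof.
  intros (l & r & Hl & Hr & ->). exists (phi l), (phi r).
  split; [now exists l|]. split; [now exists r|]. apply hom_twoS.
Qed.

Lemma weakly_conn_hom a b :
  weakly_conn L R a b -> weakly_conn (image phi L) (image phi R) (phi a) (phi b).
Proof.
  induction 1; [apply wc_refl|].
  eapply wc_step; [|eassumption]. destruct H; [left|right]; now apply twoS_arc_hom.
Qed.

Lemma twoS_arc_lift x q :
  twoS_arc (image phi L) (image phi R) (phi x) q ->
  exists x', phi x' = q /\ twoS_arc L R x x'.
Proof.
  intros (? & ? & (l & Hl & ->) & (r & Hr & ->) & ->).
  exists (gmul (gmul (ginv l) x) r). split; [apply hom_twoS|].
  now exists l, r.
Qed.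

Lemma twoS_arc_lift_rev x q :
  twoS_arc (image phi L) (image phi R) q (phi x) ->
  exists x', phi x' = q /\ twoS_arc L R x' x.
Proof.
  intros (? & ? & (l & Hl & ->) & (r & Hr & ->) & Hx).
  exists (gmul (gmul l x) (ginv r)). split.
  - rewrite !phiM, hom_inv, Hx. apply twoS_shift.
  - exists l, r. split; [assumption|]. split; [assumption|].
    symmetry. apply twoS_unshift.
Qed.

Lemma weakly_conn_lift q q' :
  weakly_conn (image phi L) (image phi R) q q' ->
  forall x, phi x = q -> exists x', phi x' = q' /\ weakly_conn L R x x'.
Proof.
  induction 1 as [q|q q1 q' Hq _ IH]; intros x <-.
  - exists x. split; [reflexivity|apply wc_refl].
  - assert (Hstep : exists x1, phi x1 = q1 /\
              (twoS_arc L R x x1 \/ twoS_arc L R x1 x)).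
    { destruct Hq as [Hq|Hq].
      - destruct (twoS_arc_lift Hq) as (x1 & ? & ?). eauto.
      - destruct (twoS_arc_lift_rev Hq) as (x1 & ? & ?). eauto. }
    destruct Hstep as (x1 & E1 & Harc).
    destruct (IH x1 E1) as (x' & E' & Hx1).
    exists x'. split; [assumption|]. exact (wc_step Harc Hx1).
Qed.
End Homomorphism.

Theorem mainTheorem19 (G Q : Group) (N : G -> Prop) (phi : G -> Q)
  (L R : G -> Prop) :
  normal_subgroup N -> is_quotient_map N phi ->
  nonempty L -> nonempty R ->
  (weakly_connected L R <->
   (weakly_connected (image phi L) (image phi R) /\
    (forall x y : G, N x -> N y -> weakly_conn L R x y))).
Proof.
  intros _ (phiM & phi_surj & phi_ker) _ _. split.
  - intros Hconn. split; [|intros; apply Hconn].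
    intros q q'. destruct (phi_surj q) as [a <-], (phi_surj q') as [b <-].
    now apply weakly_conn_hom.
  - intros [HQ HN] g h.
    destruct (weakly_conn_lift phiM (HQ (phi g) gone) g eq_refl) as (x & Ex & Hgx).
    destruct (weakly_conn_lift phiM (HQ (phi h) gone) h eq_refl) as (y & Ey & Hhy).
    apply phi_ker in Ex. apply phi_ker in Ey.
    apply (weakly_conn_trans Hgx), (weakly_conn_trans (HN x y Ex Ey)).
    now apply weakly_conn_sym.
Qed.
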